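(* Let $J$ and $K$ be subcontinua of the Cantor fan $C=F/{\sim}$ with $v\in K\subseteq J$, and let $r:J\to K$ be a retraction. Suppose there is a retraction $R:H_J\to H_K$ such that $q(R(x))=r(q(x))$ for every $x\in H_J$. Then $r$ is semi-simple, i.e. for every leg $A\in\mathcal L(J)$ there is a leg $B\in\mathcal L(J)$ with $r(A)\subseteq B$.
   Context: Let $Y$ be a Cantor set, $F=Y\times[0,1]$, and let $\sim$ be the equivalence relation on $F$ given by $(x,t)\sim(y,s)$ iff $(x,t)=(y,s)$ or $s=t=0$. Let $C=F/{\sim}$ (a Cantor fan), $q:F\to C$ the quotient map, and $v=q(Y\times\{0\})$ the top of $C$. For a subcontinuum $K$ of $C$ put $H_K=\mathrm{Cl}_F(q^{-1}(K\setminus\{v\}))$ (a fence of $K$); note $H_K\subseteq H_J$ when $K\subseteq J$. For a subcontinuum $J$ of $C$ containing $v$ (which is a fan), an end point of $J$ is a point that is an end point of every arc in $J$ containing it; a leg of $J$ is an arc from $v$ to an end point $e\neq v$ of $J$; $\mathcal L(J)$ denotes the set of legs. A retraction from $X$ onto a subspace $Z$ is a continuous map $r:X\to Z$ with $r(z)=z$ for all $z\in Z$. *)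

From HB Require Import structures.
From mathcomp Require Import all_boot all_order all_algebra.
From mathcomp Require Import all_classical all_reals all_analysis.
Set Implicit Arguments. Unset Strict Implicit. Unset Printing Implicit Defensive.
Import Order.TTheory GRing.Theory Num.Theory.
Import numFieldTopology.Exports.
Local Open Scope classical_set_scope.
Local Open Scope ring_scope.

Notation unitI R := (set_type (`[0%R, 1%R]%classic : set R)).

(* F = Y x [0,1], with Y the Cantor set (Cantor space bool^nat). *)
Notation fanF R := (cantor_space * unitI R)%type.

Definition fan_rel (R : realType) (a b : fanF R) : Prop :=
  a = b \/ (\val a.2 = 0 /\ \val b.2 = 0).

Definition is_fan_quotient (R : realType) (C : topologicalType) (q : fanF R -> C) : Prop :=
  [/\ (forall c : C, exists x, q x = c),
      (forall a b, q a = q b <-> fan_rel a b) &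
      (forall U : set C, open U <-> open (q @^-1` U))].

Lemma zero_in_unitI (R : realType) : (0 : R) \in (`[0%R, 1%R]%classic : set R).
Proof. by apply/mem_set; rewrite /= in_itv /= lexx ler01. Qed.

Definition zeroI (R : realType) : unitI R := exist _ 0 (zero_in_unitI R).

(* v = q(Y x {0}), the top of the fan. *)
Definition fan_top (R : realType) (C : topologicalType) (q : fanF R -> C) : C :=
  q ((fun _ => false), zeroI R).

Definition subcontinuum (C : topologicalType) (K : set C) : Prop :=
  [/\ K !=set0, compact K & connected K].

Definition fence (R : realType) (C : topologicalType) (q : fanF R -> C) (K : set C)
  : set (fanF R) := closure (q @^-1` (K `\ fan_top q)).

(* A is an arc with end points a and b: image of a homeomorphic embedding
   f of [0,1] with f 0 = a and f 1 = b. *)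
Definition arc_from_to (R : realType) (C : topologicalType) (A : set C) (a b : C) : Prop :=
  exists (f : R -> C) (g : C -> R),
    [/\ {within `[0%R, 1%R]%classic, continuous f}, {within A, continuous g},
        f @` `[0%R, 1%R]%classic = A,
        (forall t, `[0%R, 1%R]%classic t -> g (f t) = t) &
        f 0 = a /\ f 1 = b].

Definition end_point (R : realType) (C : topologicalType) (J : set C) (e : C) : Prop :=
  J e /\ forall (A : set C) (a b : C), A `<=` J -> arc_from_to R A a b -> A e ->
          e = a \/ e = b.

Definition leg (R : realType) (C : topologicalType) (q : fanF R -> C) (J A : set C) : Prop :=
  exists e : C, [/\ end_point R J e, e <> fan_top q, A `<=` J &
                    arc_from_to R A (fan_top q) e].

(* r : A -> B is a retraction (modelled as a map on the ambient space) *)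
Definition retraction (X : topologicalType) (A B : set X) (r : X -> X) : Prop :=
  [/\ {within A, continuous r}, r @` A `<=` B & forall z, B z -> r z = z].

Definition semi_simple (R : realType) (C : topologicalType) (q : fanF R -> C)
  (J : set C) (r : C -> C) : Prop :=
  forall A, leg q J A -> exists B, leg q J B /\ r @` A `<=` B.

From HB Require Import structures.
From mathcomp Require Import all_boot all_order all_algebra.
From mathcomp Require Import all_classical all_reals all_analysis.
From mathcomp Require Import lra.
Import Order.TTheory GRing.Theory Num.Theory.
Import numFieldTopology.Exports.
Local Open Scope classical_set_scope.
Local Open Scope ring_scope.

(* Away from the top v, a point of the fan has a base point in the Cantor set and a
   positive height, and a connected set avoiding v stays over a single base point.
   So for a leg A, with common base point x off v, the lift c |-> (x, height c) maps
   A minus v to a connected subset of the fence H_J; its image under R is connected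
   in Y x [0,1], hence lies over one point y of the zero-dimensional Y, and
   q o R = r o q puts r(A) into the ray of y.
   If r(A) is not {v}, let s be the greatest height of a point of J on that ray. The
   segment of the ray up to height s lies in J, since otherwise a clopen set around y
   would disconnect J; its top is an end point of J, since the height along an arc
   through it would be an injective continuous function with an interior maximum.
   This segment is a leg of J containing r(A). *)

Lemma connected_subset_open {T : topologicalType} (U V S : set T) :
  open U -> open V -> U `&` V = set0 ->
  connected S -> S `<=` U `|` V -> S `<=` U \/ S `<=` V.
Proof.
move=> oU oV UV0 cS SUV.
have [[c [Sc Uc]]|SU0] := pselect ((S `&` U) !=set0); [left|right].
  have SUE : S `&` U = S.
    apply: cS; first by exists c.
    - by exists U.
    - exists (~` V); first exact: open_closedC.
      apply/seteqP; split => x [Sx Ux]; split => //.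
        by move=> Vx; rewrite -[False]/(set0 x) -UV0.
      by case: (SUV x Sx).
  by rewrite -SUE; apply: subIsetr.
move=> x Sx; case: (SUV x Sx) => // Ux; exfalso; apply: SU0; by exists x.
Qed.

Lemma cantor_clopen_sep {x y : cantor_space} : x <> y ->
  exists W : set cantor_space, [/\ open W, open (~` W), W x & ~ W y].
Proof.
move=> /eqP xy; have [U [[oU cU] Ux Uy]] := cantor_zero_dimensional xy.
by exists U; split => //; exact: closed_openC.
Qed.

Lemma connected_cantor_fst {X : topologicalType} {S : set (cantor_space * X)} {a b} :
  connected S -> S a -> S b -> a.1 = b.1.
Proof.
move=> cS Sa Sb.
have cS1 : connected (fst @` S).
  apply: connected_continuous_connected cS _.
  by apply: continuous_subspaceT => z; exact: cvg_fst.
have := connected_component_max (imageP fst Sa) (@subsetT _ _) cS1.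
rewrite (zero_dimension_totally_disconnected cantor_zero_dimensional) //.
by move=> /(_ _ (imageP fst Sb)) /esym.
Qed.

Lemma within_continuous_nbhs_open {T U : topologicalType} {A : set T} {f : T -> U}
    {x : T} {N : set U} :
  {within A, continuous f} -> A x -> open N -> N (f x) ->
  nbhs x (fun t => A t -> N (f t)).
Proof.
move=> cf Ax oN Nfx.
suff : within A (nbhs x) (f @^-1` N) by [].
rewrite (nbhs_subspace_in Ax).
exact: (cf x _ (open_nbhs_nbhs (conj oN Nfx))).
Qed.

Lemma nbhs_itvcc {R : realType} {x : R} {P : set R} : nbhs x P ->
  exists2 e, 0 < e & forall t, x - e <= t <= x + e -> P t.
Proof.
move=> /nbhs_ballP [e e0 eP]; exists (e / 2); first by rewrite divr_gt0.
move=> t ht; apply: (@subset_ball_prop_in_itvcc _ x (e / 2) P).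
- by rewrite divr_gt0.
- by rewrite ball_normE mulrC divfK //; apply: lt0r_neq0.
- by rewrite in_itv /=.
Qed.

Lemma injective_continuous_no_interior_max {R : realType} (h : R -> R) (a c b : R) :
  a < c < b -> {within `[a, b], continuous h} ->
  (forall t t', a <= t <= b -> a <= t' <= b -> h t = h t' -> t = t') ->
  ~ (forall t, a <= t <= b -> h t <= h c).
Proof.
move=> /andP[ac cb] ch hinj hmax.
have hsub : forall a' b', a <= a' -> b' <= b -> {within `[a', b'], continuous h}.
  move=> a' b' aa' b'b; apply: continuous_subspaceW ch => t.
  by rewrite /= !in_itv /= => /andP[? ?]; apply/andP; split; lra.
have [hab|hba] := leP (h a) (h b).
- have [t] : exists2 t, t \in `[a, c] & h t = h b.
    apply: IVT; [lra | apply: hsub; lra | ].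
    by rewrite ge_min hab /= le_max hmax ?orbT //; apply/andP; split; lra.
  rewrite in_itv /= => /andP[ta tc] htb.
  suff : t = b by lra.
  by apply: hinj htb; apply/andP; split; lra.
- have [t] : exists2 t, t \in `[c, b] & h t = h a.
    apply: IVT; [lra | apply: hsub; lra | ].
    by rewrite ge_min (ltW hba) orbT /= le_max hmax //; apply/andP; split; lra.
  rewrite in_itv /= => /andP[ct tb] hta.
  suff : t = a by lra.
  by apply: hinj hta; apply/andP; split; lra.
Qed.

Lemma arc_param_inj {R : realType} {C : topologicalType} {f : R -> C} {g : C -> R} :
  (forall t, `[0%R, 1%R]%classic t -> g (f t) = t) ->
  forall t t', `[0%R, 1%R]%classic t -> `[0%R, 1%R]%classic t' -> f t = f t' -> t = t'.
Proof. by move=> gf t t' t01 t'01 e; rewrite -(gf t t01) -(gf t' t'01) e. Qed.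

Lemma cantor_clopen_nbhs {Q : set cantor_space} {y : cantor_space} :
  closed Q -> ~ Q y ->
  exists D : set cantor_space, [/\ D y, open D, open (~` D) & D `<=` ~` Q].
Proof.
move=> cQ Qy.
have nQ : nbhs y (~` Q) by apply: open_nbhs_nbhs; split => //; exact: closed_openC.
have [D [Dy [oD cD]] DQ] := zero_dimensional_cvg cantor_space_hausdorff
  cantor_zero_dimensional cantor_space_compact nQ.
by exists D; split => //; exact: closed_openC.
Qed.

Lemma arc_from_to_ends {R : realType} {C : topologicalType} {A : set C} {a b : C} :
  arc_from_to R A a b -> [/\ A a, A b & a <> b].
Proof.
move=> [f [g [_ _ <- gf [<- <-]]]].
have I0 : `[0%R, 1%R]%classic (0 : R) by rewrite /= in_itv /= lexx ler01.
have I1 : `[0%R, 1%R]%classic (1 : R) by rewrite /= in_itv /= lexx ler01.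
split; [by exists 0 | by exists 1 | ].
by move=> /(arc_param_inj gf _ _ I0 I1) /eqP; rewrite eq_sym oner_eq0.
Qed.

Lemma connected_arc_punctured {R : realType} {C : topologicalType} {A : set C} {a b : C} :
  arc_from_to R A a b -> connected (A `\ a).
Proof.
move=> [f [g [cf _ fA gf [fa _]]]].
have I01 : `](0 : R), 1%R]%classic `<=` `[0%R, 1%R]%classic.
  by move=> t; rewrite /= !in_itv /= => /andP[t_gt0 ->]; rewrite ltW.
have I0 : `[0%R, 1%R]%classic (0 : R) by rewrite /= in_itv /= lexx ler01.
have -> : A `\ a = f @` `](0 : R), 1%R]%classic.
  rewrite -fA -fa; apply/seteqP; split => [c [[t tI <-] ft_neq]|c [t tI <-]].
    exists t => //; move: tI; rewrite /= !in_itv /= => /andP[t_ge0 ->].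
    by rewrite andbT lt_neqAle t_ge0 andbT; apply: contra_notN ft_neq => /eqP <-.
  split; first by exists t => //; exact: I01.
  move=> /= /(arc_param_inj gf _ _ (I01 t tI) I0) t0.
  by move: tI; rewrite t0 /= in_itv /= ltxx.
apply: connected_continuous_connected; last exact: continuous_subspaceW I01 cf.
by apply/connected_intervalP; exact: interval_is_interval.
Qed.

Lemma clamp01_subproof {R : realType} (u : R) :
  Num.max 0 (Num.min u 1) \in (`[0%R, 1%R]%classic : set R).
Proof.
apply/mem_set; rewrite /= in_itv /= le_max lexx /=.
by rewrite ge_max ler01 ge_min lexx orbT.
Qed.

Definition clamp01 {R : realType} (u : R) : unitI R :=
  exist _ (Num.max 0 (Num.min u 1)) (clamp01_subproof u).

Lemma clamp01_id {R : realType} (u : R) : 0 <= u <= 1 -> \val (clamp01 u) = u.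
Proof. by move=> /andP[u0 u1] /=; rewrite min_l // max_r. Qed.

Lemma continuous_clamp01 {R : realType} : continuous (@clamp01 R).
Proof.
apply: (@continuous_comp_initial _ _ _ _ (clamp01 : R -> initial_topology set_val)).
change (continuous ((fun=> (0 : R^o)) \max ((fun x : R^o => x) \min (fun=> (1 : R^o))))).
move=> x; apply: continuous_max; first exact: cst_continuous.
by apply: continuous_min => //; exact: cst_continuous.
Qed.

Section Fan.
Context {R : realType} {C : topologicalType} {q : fanF R -> C}.
Hypothesis hq : is_fan_quotient q.
Local Notation v := (fan_top q).

Lemma q_surj c : exists x, q x = c. Proof. by case: hq. Qed.
Lemma q_eq a b : q a = q b <-> fan_rel a b. Proof. by case: hq. Qed.
Lemma q_open U : open (q @^-1` U) -> open U. Proof. by case: hq => _ _ h /h. Qed.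
Lemma q_continuous : continuous q.
Proof. by apply/continuousP => U oU; case: hq => _ _ /(_ U) [/(_ oU)]. Qed.

(* At the top [v] the base point chosen by [qinv] is arbitrary; hence the
   facts about [fan_base] below assume a positive height. *)
Definition qinv (c : C) : fanF R := projT1 (cid (q_surj c)).
Definition fan_base (c : C) : cantor_space := (qinv c).1.
Definition fan_level (c : C) : unitI R := (qinv c).2.
Definition fan_height (c : C) : R := \val (fan_level c).

Local Notation base := fan_base.
Local Notation height := fan_height.

Lemma qinvK c : q (qinv c) = c. Proof. exact: projT2 (cid (q_surj c)). Qed.

Lemma q_base_level c : q (base c, fan_level c) = c.
Proof. by rewrite /fan_base /fan_level -surjective_pairing qinvK. Qed.

Lemma fan_level_q x : fan_level (q x) = x.2.
Proof.
apply: val_inj; rewrite /fan_level.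
by have /q_eq [->|[-> ->]] := qinvK (q x).
Qed.

Lemma fan_height_q x : height (q x) = \val x.2.
Proof. by rewrite /fan_height fan_level_q. Qed.

Lemma fan_base_q x : 0 < \val x.2 -> base (q x) = x.1.
Proof.
move=> x2_gt0; rewrite /fan_base.
by have /q_eq [->|[_ x20]] := qinvK (q x); rewrite // x20 ltxx in x2_gt0.
Qed.

Lemma fan_height_itv c : 0 <= height c <= 1.
Proof. by have := set_valP (fan_level c); rewrite /= in_itv. Qed.

Lemma q_eq_top x : q x = v <-> \val x.2 = 0.
Proof.
split; first by move/q_eq => [->|[]].
by move=> x20; apply/q_eq; right.
Qed.

Lemma fan_height_eq0 c : height c = 0 <-> c = v.
Proof. by rewrite -{2}(qinvK c) q_eq_top. Qed.

Lemma fan_height_top : height v = 0. Proof. exact/fan_height_eq0. Qed.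

Lemma fan_height_gt0 c : c <> v -> 0 < height c.
Proof.
move=> cv; rewrite lt_neqAle; case/andP: (fan_height_itv c) => -> _; rewrite andbT eq_sym.
by apply/eqP => /fan_height_eq0.
Qed.

Lemma fan_point_eq c1 c2 : base c1 = base c2 -> height c1 = height c2 -> c1 = c2.
Proof.
move=> e1 e2; rewrite -(q_base_level c1) -(q_base_level c2) e1.
by congr (q (_, _)); exact: val_inj.
Qed.

Lemma continuous_fan_height : continuous height.
Proof.
apply/continuousP => O oO; apply: q_open.
have -> : q @^-1` (height @^-1` O) = (fun x : fanF R => \val x.2) @^-1` O.
  by apply/seteqP; split => x /=; rewrite fan_height_q.
move: O oO; apply/continuousP => x.
by apply: continuous_comp; [exact: cvg_snd | exact: initial_continuous].
Qed.

Lemma continuous_fan_level : continuous fan_level.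
Proof.
apply: (@continuous_comp_initial _ _ _ _ (fan_level : C -> initial_topology set_val)).
exact: continuous_fan_height.
Qed.

Lemma open_fan_height_lt a : open [set c | height c < a].
Proof.
by apply: (@open_comp _ _ height [set t | t < a]) => // x _; exact: continuous_fan_height.
Qed.

Lemma open_fan_height_gt a : open [set c | a < height c].
Proof.
by apply: (@open_comp _ _ height [set t | a < t]) => // x _; exact: continuous_fan_height.
Qed.

Lemma open_fan_base {W : set cantor_space} : open W ->
  open [set c | 0 < height c /\ W (base c)].
Proof.
move=> oW; apply: q_open.
have -> : q @^-1` [set c | 0 < height c /\ W (base c)] =
    [set x | 0 < \val x.2] `&` (fst @^-1` W).
  apply/seteqP; split => x /=; rewrite fan_height_q.
    by move=> [x2_gt0 Wx]; split => //; rewrite -fan_base_q.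
  by move=> [x2_gt0 Wx]; split => //; rewrite fan_base_q.
apply: openI; last by apply: open_comp => // x _; exact: cvg_fst.
apply: (@open_comp _ _ (fun x : fanF R => \val x.2) [set t | 0 < t]); last exact: open_gt.
by move=> x _; apply: continuous_comp; [exact: cvg_snd | exact: initial_continuous].
Qed.

Lemma fan_hausdorff : hausdorff_space C.
Proof.
rewrite open_hausdorff => c1 c2 /eqP c12.
pose m := (height c1 + height c2) / 2.
have [h12|h21|e12] := ltgtP (height c1) (height c2).
- exists ([set c | height c < m], [set c | m < height c]).
    by split; rewrite inE /= /m; lra.
  split; [exact: open_fan_height_lt | exact: open_fan_height_gt | ].
  by apply/eqP/seteqP; split => x // [/= h1 h2]; move: (lt_trans h1 h2); rewrite ltxx.
- exists ([set c | m < height c], [set c | height c < m]).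
    by split; rewrite inE /= /m; lra.
  split; [exact: open_fan_height_gt | exact: open_fan_height_lt | ].
  by apply/eqP/seteqP; split => x // [/= h1 h2]; move: (lt_trans h1 h2); rewrite ltxx.
have b12 : base c1 <> base c2 by move=> b12; exact/c12/fan_point_eq.
have h1_gt0 : 0 < height c1.
  apply: fan_height_gt0 => c1v; apply: c12; rewrite c1v; apply/esym/fan_height_eq0.
  by rewrite -e12 c1v fan_height_top.
have [W [oW oWC W1 W2]] := cantor_clopen_sep b12.
exists ([set c | 0 < height c /\ W (base c)], [set c | 0 < height c /\ (~` W) (base c)]).
  by split; rewrite inE /=; split => //; rewrite -e12.
split; [exact: open_fan_base | exact: open_fan_base | ].
by apply/eqP/seteqP; split => x // [/= [_ h1] [_ h2]].
Qed.

Lemma connected_fan_base {S : set C} {c1 c2 : C} : connected S -> ~ S v ->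
  S c1 -> S c2 -> base c1 = base c2.
Proof.
move=> cS Sv S1 S2; apply: contrapT => b12.
have [W [oW oWC W1 W2]] := cantor_clopen_sep b12.
have Spos c : S c -> 0 < height c.
  by move=> Sc; apply: fan_height_gt0 => cv; rewrite cv in Sc.
have [] := @connected_subset_open _ [set c | 0 < height c /\ W (base c)]
  [set c | 0 < height c /\ (~` W) (base c)] S (open_fan_base oW) (open_fan_base oWC).
- by apply/seteqP; split => // c [[_ ?] [_ ?]].
- by [].
- move=> c Sc; have c_gt0 := Spos c Sc.
  by have [Wc|nWc] := pselect (W (base c)); [left|right].
- by move=> /(_ c2 S2) [].
- by move=> /(_ c1 S1) [_ /(_ W1)].
Qed.

Definition fan_ray (y : cantor_space) (u : R) : C := q (y, clamp01 u).

Lemma continuous_fan_ray y : continuous (fan_ray y).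
Proof.
move=> u; apply: (@continuous_comp _ _ _ (fun u => (y, clamp01 u)) q).
  exact: (cvg_pair (cvg_cst y) (continuous_clamp01 u)).
exact: q_continuous.
Qed.

Lemma continuous_fan_ray_base u : continuous (fan_ray^~ u).
Proof.
move=> y; apply: (@continuous_comp _ _ _ (fun y => (y, clamp01 u)) q).
  exact: (cvg_pair (@cvg_id _ _) (cvg_cst (clamp01 u))).
exact: q_continuous.
Qed.

Lemma fan_ray_val y (u : unitI R) : fan_ray y (\val u) = q (y, u).
Proof.
rewrite /fan_ray; congr (q (_, _)); apply: val_inj; apply: clamp01_id.
by have := set_valP u; rewrite /= in_itv.
Qed.

Lemma fan_height_ray y u : 0 <= u <= 1 -> height (fan_ray y u) = u.
Proof. by move=> u01; rewrite /fan_ray fan_height_q clamp01_id. Qed.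

Lemma fan_base_ray y u : 0 < u <= 1 -> base (fan_ray y u) = y.
Proof. by move=> /andP[u0 u1]; rewrite /fan_ray fan_base_q // clamp01_id // ltW. Qed.

Lemma fan_ray0 y : fan_ray y 0 = v.
Proof. by apply/fan_height_eq0; rewrite fan_height_ray // lexx ler01. Qed.

Lemma fan_ray_base_height c : fan_ray (base c) (height c) = c.
Proof.
rewrite -[in RHS](q_base_level c) /fan_ray; congr (q (_, _)); apply: val_inj.
exact/clamp01_id/fan_height_itv.
Qed.

Lemma subcontinuum_closed {S : set C} : subcontinuum S -> closed S.
Proof. by case=> _ cS _; exact: (compact_closed fan_hausdorff cS). Qed.

Lemma arc_locally_in_ray {f : R -> C} {t0 : R} :
  {within `[0%R, 1%R]%classic, continuous f} -> 0 < t0 < 1 -> 0 < height (f t0) ->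
  exists2 d, 0 < d & forall t, t0 - d <= t <= t0 + d ->
    `[0%R, 1%R]%classic t /\ base (f t) = base (f t0).
Proof.
move=> cf /andP[t0_gt0 t0_lt1] ft0_gt0.
have t0I : `[0%R, 1%R]%classic t0 by rewrite /= in_itv /=; apply/andP; split; lra.
have [e e_gt0 eP] := nbhs_itvcc
  (within_continuous_nbhs_open cf t0I (open_fan_height_gt 0) ft0_gt0).
pose d := Num.min e (Num.min t0 (1 - t0)).
have d_gt0 : 0 < d by rewrite !lt_min e_gt0 t0_gt0 subr_gt0 t0_lt1.
have [de dt0 dt1] : [/\ d <= e, d <= t0 & d <= 1 - t0].
  by split; rewrite /d !ge_min lexx ?orbT.
have LI t : t0 - d <= t <= t0 + d -> `[0%R, 1%R]%classic t.
  by move=> /andP[? ?]; rewrite /= in_itv /=; apply/andP; split; lra.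
have Lsub : `[t0 - d, t0 + d]%classic `<=` `[0%R, 1%R]%classic.
  by move=> t; rewrite /= in_itv /= => /LI.
exists d => // t tL; split; first exact: LI.
apply: (@connected_fan_base (f @` `[t0 - d, t0 + d]%classic)).
- apply: connected_continuous_connected; last exact: continuous_subspaceW Lsub cf.
  by apply/connected_intervalP; exact: interval_is_interval.
- move=> [t' t'L ft'v]; have t'L' : t0 - d <= t' <= t0 + d by move: t'L; rewrite /= in_itv.
  have /andP[? ?] := t'L'.
  have : 0 < height (f t') by apply: eP (LI t' t'L'); apply/andP; split; lra.
  by rewrite ft'v fan_height_top ltxx.
- by exists t => //; rewrite /= in_itv.
- by exists t0 => //; rewrite /= in_itv /=; apply/andP; split; lra.
Qed.

Lemma end_point_fan_ray_max {J : set C} {y s} : 0 < s <= 1 -> J (fan_ray y s) ->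
  (forall u, 0 <= u <= 1 -> J (fan_ray y u) -> u <= s) -> end_point R J (fan_ray y s).
Proof.
move=> /andP[s_gt0 s_le1] Js s_max; split => // A a b AJ [f [g [cf _ fA gf [fa fb]]]] Ae.
have [t0 t0I ft0] : (f @` `[0%R, 1%R]%classic) (fan_ray y s) by rewrite fA.
have /andP[t0_ge0 t0_le1] : 0 <= t0 <= 1 by move: t0I; rewrite /= in_itv.
have [t0_eq0|t0_neq0] := eqVneq t0 0; first by left; rewrite -ft0 t0_eq0.
have [t0_eq1|t0_neq1] := eqVneq t0 1; first by right; rewrite -ft0 t0_eq1.
exfalso.
have hs : height (f t0) = s by rewrite ft0 fan_height_ray // ltW.
have bs : base (f t0) = y by rewrite ft0 fan_base_ray // s_gt0.
have t0_in : 0 < t0 < 1 by rewrite !lt_neqAle t0_ge0 t0_le1 eq_sym t0_neq0 t0_neq1.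
have [d d_gt0 dP] := arc_locally_in_ray cf t0_in ltac:(by rewrite hs).
apply: (@injective_continuous_no_interior_max _ (height \o f) (t0 - d) t0 (t0 + d)).
- by apply/andP; split; lra.
- apply: within_continuous_comp; first by move=> c _; exact: continuous_fan_height.
  apply: continuous_subspaceW cf => t; rewrite /= in_itv /=.
  by move=> /dP [].
- move=> t t' tL t'L /= htt'; have [tI bt] := dP t tL; have [t'I bt'] := dP t' t'L.
  by apply: (arc_param_inj gf _ _ tI t'I); apply: fan_point_eq => //; rewrite bt bt'.
- move=> t tL /=; rewrite hs; have [tI bt] := dP t tL.
  apply: s_max; first exact: fan_height_itv.
  by rewrite -bs -bt fan_ray_base_height; apply: AJ; rewrite -fA; exists t.
Qed.

Lemma fan_ray_segment_sub {J : set C} {y s} : subcontinuum J -> J v ->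
  s <= 1 -> J (fan_ray y s) -> forall u, 0 <= u <= s -> J (fan_ray y u).
Proof.
move=> hJ Jv s_le1 Js u /andP[u_ge0 u_le_s].
have [->|u_neq0] := eqVneq u 0; first by rewrite fan_ray0.
have [->|u_neq_s] := eqVneq u s; first by [].
have u_gt0 : 0 < u by rewrite lt_neqAle eq_sym u_neq0.
have u_lt_s : u < s by rewrite lt_neqAle u_neq_s.
apply: contrapT => Ju.
have cQ : closed [set w | J (fan_ray w u)].
  apply: preimage_closed; last exact: subcontinuum_closed.
  by move=> w _; exact: continuous_fan_ray_base.
have [D [Dy oD oDC DQ]] := cantor_clopen_nbhs cQ Ju.
have [] := @connected_subset_open _
  ([set c | u < height c] `&` [set c | 0 < height c /\ D (base c)])
  ([set c | height c < u] `|` [set c | 0 < height c /\ (~` D) (base c)]) J.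
- exact: openI (open_fan_height_gt u) (open_fan_base oD).
- exact: openU (open_fan_height_lt u) (open_fan_base oDC).
- apply/seteqP; split => // c [[/= uc [_ Dc]] [/= cu|[_ nDc]]] //.
  lra.
- by case: hJ.
- move=> c Jc; have [cu|uc|cu] := ltgtP (height c) u.
  + by right; left.
  + have c_gt0 := lt_trans u_gt0 uc.
    by have [Dc|nDc] := pselect (D (base c)); [left|right; right].
  + right; right; split; first by rewrite cu.
    by move=> /DQ; apply; rewrite /= -cu fan_ray_base_height.
- by move=> /(_ _ Jv) [/=]; rewrite fan_height_top; lra.
- have [hs bs] : height (fan_ray y s) = s /\ base (fan_ray y s) = y.
    by split; [apply: fan_height_ray | apply: fan_base_ray]; apply/andP; split; lra.
  move=> /(_ _ Js) [/=|[_ /=]]; rewrite ?hs ?bs //.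
  lra.
Qed.

Lemma arc_fan_ray_segment y s : 0 < s <= 1 ->
  arc_from_to R (fan_ray y @` `[0%R, s]%classic) v (fan_ray y s).
Proof.
move=> /andP[s_gt0 s_le1]; have s_ge0 := ltW s_gt0.
exists (fun t => fan_ray y (t * s)), (fun c => height c / s); split.
- apply: continuous_subspaceT => t.
  by apply: continuous_comp; [exact: mulrr_continuous | exact: continuous_fan_ray].
- apply: continuous_subspaceT => c.
  by apply: (@continuous_comp _ R _ height (fun t : R => t / s));
    [exact: continuous_fan_height | exact: mulrr_continuous].
- apply/seteqP; split => c [t + <-]; rewrite /= !in_itv /= => /andP[t_ge0 t_le].
    by exists (t * s) => //; rewrite /= in_itv /= mulr_ge0 //= ler_piMl.
  exists (t / s); last by rewrite divfK // gt_eqF.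
  by rewrite /= in_itv /= divr_ge0 //= ler_pdivrMr // mul1r.
- move=> t; rewrite /= in_itv /= => /andP[t_ge0 t_le1].
  rewrite fan_height_ray ?mulfK ?gt_eqF //.
  by rewrite mulr_ge0 //= (le_trans _ s_le1) // ler_piMl.
- by rewrite mul0r mul1r fan_ray0.
Qed.

Lemma fan_ray_highest {J : set C} {y u0} : closed J -> 0 < u0 <= 1 -> J (fan_ray y u0) ->
  exists s, [/\ 0 < s <= 1, J (fan_ray y s) &
    forall u, 0 <= u <= 1 -> J (fan_ray y u) -> u <= s].
Proof.
move=> cJ /andP[u0_gt0 u0_le1] Ju0.
pose P := `[0%R, 1%R]%classic `&` fan_ray y @^-1` J.
have Pu0 : P u0 by split => //; rewrite /= in_itv /= ltW.
have cP : closed P.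
  apply: closedI; first exact: itv_closed.
  by apply: preimage_closed => // u _; exact: continuous_fan_ray.
have s_max u : 0 <= u <= 1 -> J (fan_ray y u) -> u <= sup P.
  move=> u01 Ju; apply: sup_upper_bound; last by split => //; rewrite /= in_itv.
  by split; [exists u0 | exists 1 => x [/=]; rewrite in_itv => /andP[]].
have [] : P (sup P).
  apply: (itv_closed_supremums _ cP); first by exists u0.
  split => [x [x01 Jx]|x ubx]; last by apply: ge_sup => //; exists u0.
  by apply: s_max Jx; move: x01; rewrite /= in_itv.
move=> s01 Js; have /andP[s_ge0 s_le1] : 0 <= sup P <= 1 by move: s01; rewrite /= in_itv.
exists (sup P); split => //; apply/andP; split => //.
by apply: (lt_le_trans u0_gt0); apply: s_max Ju0; rewrite (ltW u0_gt0).
Qed.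

Lemma leg_fan_ray {J Z : set C} {y} : subcontinuum J -> J v -> Z `<=` J ->
  Z `<=` range (fun u => q (y, u)) -> (exists2 z, Z z & z <> v) ->
  exists B, leg q J B /\ Z `<=` B.
Proof.
move=> hJ Jv ZJ Zy [z0 Zz0 z0v].
have [u0 _ ez0] := Zy z0 Zz0.
have [s [/andP[s_gt0 s_le1] Js s_max]] : exists s, [/\ 0 < s <= 1, J (fan_ray y s) &
    forall u, 0 <= u <= 1 -> J (fan_ray y u) -> u <= s].
  apply: (@fan_ray_highest _ _ (\val u0)); first exact: subcontinuum_closed.
    have := fan_height_q (y, u0); rewrite ez0 /= => <-.
    by rewrite fan_height_gt0 //=; case/andP: (fan_height_itv z0).
  by rewrite fan_ray_val ez0; exact: ZJ.
exists (fan_ray y @` `[0%R, s]%classic); split.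
  exists (fan_ray y s); split.
  - by apply: end_point_fan_ray_max => //; rewrite s_gt0.
  - move=> /fan_height_eq0; rewrite fan_height_ray ?(ltW s_gt0) //; lra.
  - move=> c [u]; rewrite /= in_itv => u0s <-.
    exact: (fan_ray_segment_sub hJ Jv s_le1 Js).
  - by apply: arc_fan_ray_segment; rewrite s_gt0.
move=> z Zz; have [u _ zu] := Zy z Zz; rewrite -zu in Zz *.
have u01 : 0 <= \val u <= 1 by have := set_valP u; rewrite /= in_itv.
exists (\val u); last exact: fan_ray_val.
rewrite /= in_itv /=; case/andP: (u01) => -> _ /=.
by apply: s_max u01 _; rewrite fan_ray_val; exact: ZJ.
Qed.

Lemma arc_in_ray_image {J : set C} {r : C -> C} {Rt : fanF R -> fanF R} {A e} :
  r v = v -> {within fence q J, continuous Rt} ->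
  (forall x, fence q J x -> q (Rt x) = r (q x)) ->
  A `<=` J -> arc_from_to R A v e -> exists y, r @` A `<=` range (fun u => q (y, u)).
Proof.
move=> rv cRt hcomm AJ arcA.
have [_ Ae ev] := arc_from_to_ends arcA.
have cS := connected_arc_punctured arcA.
have Se : (A `\ v) e by split => //= /esym.
pose p a := (base e, fan_level a).
have qp a : (A `\ v) a -> q (p a) = a.
  move=> Sa; rewrite /p -(connected_fan_base cS _ Sa Se) ?q_base_level //.
  by case=> _; apply.
have pH a : (A `\ v) a -> fence q J (p a).
  by move=> Sa; apply: subset_closure; rewrite /= qp //; case: Sa => /AJ.
have cT : connected (Rt @` (p @` (A `\ v))).
  apply: connected_continuous_connected.
    apply: connected_continuous_connected cS _; apply: continuous_subspaceT => a.
    exact: (cvg_pair (cvg_cst (base e)) (continuous_fan_level a)).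
  by apply: continuous_subspaceW cRt => _ [a Sa <-]; exact: pH.
exists (Rt (p e)).1 => _ [a Aa <-].
have [->|av] := pselect (a = v).
  by exists (zeroI R) => //; rewrite rv; apply/q_eq_top.
have Sa : (A `\ v) a by [].
exists (Rt (p a)).2 => //.
rewrite (connected_cantor_fst cT (imageP _ (imageP p Se)) (imageP _ (imageP p Sa))).
by rewrite -surjective_pairing hcomm ?qp //; exact: pH.
Qed.

End Fan.

Theorem mainTheorem14 (R : realType) (C : topologicalType) (q : fanF R -> C)
  (hq : is_fan_quotient q) (J K : set C)
  (hJ : subcontinuum J) (hK : subcontinuum K)
  (hv : K (fan_top q)) (hKJ : K `<=` J)
  (r : C -> C) (hr : retraction J K r)
  (Rt : fanF R -> fanF R) (hR : retraction (fence q J) (fence q K) Rt)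
  (hcomm : forall x, fence q J x -> q (Rt x) = r (q x)) :
  semi_simple q J r.
Proof.
move=> A [e [Je ev AJ arcA]].
have [_ rJK rK] := hr; have [cRt _ _] := hR.
have [rAv|rA_top] := pselect (exists2 z, (r @` A) z & z <> fan_top q).
  have [y rAy] := arc_in_ray_image hq (rK _ hv) cRt hcomm AJ arcA.
  apply: (leg_fan_ray hq hJ (hKJ _ hv) _ rAy rAv).
  by move=> _ [a Aa <-]; apply/hKJ/rJK; exists a => //; exact: AJ.
exists A; split; first by exists e.
move=> z rAz; have -> : z = fan_top q by apply: contrapT => zv; apply: rA_top; exists z.
by case: (arc_from_to_ends arcA).
Qed.
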